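(* Let $\mathcal{G}$ be a finite collection of nonempty subsets of $\{1,\dots,d\}$, let $n=\sum_{g\in\mathcal{G}}|g|$, and let $\mathbb{R}^n$ be partitioned into pairwise disjoint index blocks $j(g)\subseteq\{1,\dots,n\}$, $|j(g)|=|g|$, one for each $g\in\mathcal{G}$, so that for $\mathbf{x}\in\mathbb{R}^n$ the subvector $\mathbf{x}_{j(g)}\in\mathbb{R}^{|g|}$ is identified with a vector supported on the coordinates in $g$. Let $M\in\{0,1\}^{d\times n}$ be the matrix with $(M\mathbf{x})_i=\sum_{g\in\mathcal{G}:\, i\in g}(\text{entry of }\mathbf{x}_{j(g)}\text{ corresponding to coordinate }i)$. Let $\lambda>0$, $w_g>0$ for $g\in\mathcal{G}$, $\mathbf{b}\in\mathbb{R}^d$ and $\rho>0$. Define the augmented Lagrangian $$L_\rho(\mathbf{x}^1,\mathbf{x}^2;\mathbf{y})=\lambda\sum_{g\in\mathcal{G}}w_g\|\mathbf{x}^1_{j(g)}\|_2+\tfrac12\|M\mathbf{x}^2-\mathbf{b}\|_2^2+\langle\mathbf{y},\mathbf{x}^1-\mathbf{x}^2\rangle+\tfrac{\rho}{2}\|\mathbf{x}^1-\mathbf{x}^2\|_2^2,$$ for $\mathbf{x}^1,\mathbf{x}^2,\mathbf{y}\in\mathbb{R}^n$, the augmented dual function $g_\rho(\mathbf{y})=\min_{\mathbf{x}^1,\mathbf{x}^2\in\mathbb{R}^n}L_\rho(\mathbf{x}^1,\mathbf{x}^2;\mathbf{y})$, and let $Y^*$ be the set of maximizers of $g_\rho$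 over $\mathbb{R}^n$. Then there exists $\tau_d>0$ such that for all $\mathbf{y}\in\mathbb{R}^n$, $$\mathrm{dist}(\mathbf{y},Y^* )\le\tau_d\|\nabla g_\rho(\mathbf{y})\|_2 .$$
   Context: This is the reformulation of the proximal operator of the latent overlapping group lasso penalty $\Omega(\boldsymbol\beta)=\inf\{\sum_g w_g\|\boldsymbol\nu^{(g)}\|_2:\sum_g\boldsymbol\nu^{(g)}=\boldsymbol\beta,\ \boldsymbol\nu^{(g)}_{g^c}=0\}$ evaluated at $\mathbf{b}$, written as $\min_{\mathbf{x}^1,\mathbf{x}^2}\lambda\sum_g w_g\|\mathbf{x}^1_{j(g)}\|_2+\frac12\|M\mathbf{x}^2-\mathbf{b}\|_2^2$ subject to $\mathbf{x}^1=\mathbf{x}^2$; $L_\rho$ is its augmented Lagrangian with multiplier $\mathbf{y}$ for the constraint $\mathbf{x}^1=\mathbf{x}^2$, and $\mathrm{dist}(\mathbf{y},Y^* )=\inf_{\mathbf{y}^*\in Y^*}\|\mathbf{y}-\mathbf{y}^*\|_2$. *)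

From HB Require Import structures.
From mathcomp Require Import all_boot all_order all_algebra.
From mathcomp Require Import all_classical all_reals.
Unset Printing Implicit Defensive.
Import Order.TTheory GRing.Theory Num.Theory.
Local Open Scope ring_scope.
Local Open Scope classical_set_scope.

(* The index set of R^n, n = sum_{g in G} |g|: the pairs (g, i) with g in G
   and i in g.  The block j(g) is {(g,i) | i in g}, and its entry (g,i)
   corresponds to coordinate i of {1..d}. *)
Definition gpred (d : nat) (G : {set {set 'I_d}}) : pred ({set 'I_d} * 'I_d) :=
  fun p => (p.1 \in G) && (p.2 \in p.1).
Definition gidx (d : nat) (G : {set {set 'I_d}}) := {p | gpred d G p}.

Section Defs.
Variables (R : realType) (d : nat) (G : {set {set 'I_d}}).
Local Notation I := (gidx d G).

Definition vdot (x y : I -> R) : R := \sum_(k : I) x k * y k.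
Definition vnorm (x : I -> R) : R := Num.sqrt (vdot x x).
Definition dnorm (z : 'I_d -> R) : R := Num.sqrt (\sum_(i : 'I_d) z i ^+ 2).

Definition blocknorm (x : I -> R) (g : {set 'I_d}) : R :=
  Num.sqrt (\sum_(k : I | (val k).1 == g) x k ^+ 2).

Definition Mop (x : I -> R) : 'I_d -> R :=
  fun i => \sum_(k : I | (val k).2 == i) x k.

Definition Lrho (lambda rho : R) (w : {set 'I_d} -> R) (b : 'I_d -> R)
  (x1 x2 y : I -> R) : R :=
  lambda * (\sum_(g in G) w g * blocknorm x1 g)
  + 2^-1 * (dnorm (fun i => Mop x2 i - b i)) ^+ 2
  + vdot y (fun k => x1 k - x2 k)
  + rho / 2 * (vnorm (fun k => x1 k - x2 k)) ^+ 2.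

Definition grho lambda rho w b (y : I -> R) : R :=
  inf [set Lrho lambda rho w b x1 x2 y | x1 in [set: I -> R] & x2 in [set: I -> R]].

Definition Ystar lambda rho w b : set (I -> R) :=
  [set y | forall y', grho lambda rho w b y' <= grho lambda rho w b y].

Definition vdist (y : I -> R) (S : set (I -> R)) : R :=
  inf [set vnorm (fun k => y k - z k) | z in S].

Definition is_gradient (f : (I -> R) -> R) (y v : I -> R) : Prop :=
  forall eps : R, 0 < eps -> exists2 delta : R, 0 < delta &
    forall h : I -> R, vnorm h < delta ->
      `| f (fun k => y k + h k) - f y - vdot v h | <= eps * vnorm h.

End Defs.

From Pilot Require Import Defs.
From HB Require Import structures.
From mathcomp Require Import all_boot all_order all_algebra.
From mathcomp Require Import all_classical all_reals.
From mathcomp Require Import topology normedtype realfun derive.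
From mathcomp Require Import ring lra.
Import Order.TTheory GRing.Theory Num.Theory.
Import numFieldNormedType.Exports.
Local Open Scope ring_scope.
Local Open Scope classical_set_scope.

(* Write u = M x^2 - b.  Completing squares, L_rho(x^1, x^2; y) is at least
   phi_y(u) = - |u|^2 / 2 - <u, b> - |M^T u - y|^2 / (2 rho) for every u with
   |(M^T u)_j(g)| <= lambda w_g, up to two explicit nonnegative slack terms.
   Minimizers of L_rho(., .; y) exist by coercivity, and their first-order
   conditions say that u = M x^2 - b is feasible, M^T u = y + rho (x^1 - x^2)
   and both slacks vanish, so g_rho(y) = phi_y(u).  As phi is quadratic in y
   with the same u, g_rho(y + h) is squeezed between
   g_rho(y) + <x^1 - x^2, h> - |h|^2 / (2 rho) and g_rho(y) + <x^1 - x^2, h>,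
   hence grad g_rho(y) = x^1 - x^2.  A primal minimizer x yields the
   maximizer y0 = M^T u0 with u0 = M x - b.  Writing the slack inequality at
   (x^1, x^2; y) against u0 and at (x, x; y0) against u and adding them gives
   2 rho |u - u0|^2 <= |y0 - y|^2 - |M^T u - y|^2 - |M^T u - y0|^2; together
   with |M^T (u - u0)|^2 <= n |u - u0|^2 and Cauchy-Schwarz this yields
   |y - y0| <= (n + 2 rho) |x^1 - x^2|. *)

Section SumsOfSquares.
Context {R : rcfType}.

Lemma sum_sqr_ge0 {T : finType} (P : pred T) (x : T -> R) : 0 <= \sum_(k | P k) x k ^+ 2.
Proof. by apply: sumr_ge0 => k _; exact: sqr_ge0. Qed.

Lemma cauchy_schwarz_sum {T : finType} (P : pred T) (x y : T -> R) :
  (\sum_(k | P k) x k * y k) ^+ 2 <=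
  (\sum_(k | P k) x k ^+ 2) * (\sum_(k | P k) y k ^+ 2).
Proof.
set A := \sum_(k | P k) x k ^+ 2; set B := \sum_(k | P k) y k ^+ 2.
set S := \sum_(k | P k) x k * y k.
have A_ge0 : 0 <= A := sum_sqr_ge0 P x.
have expand : \sum_(k | P k) (A * y k - S * x k) ^+ 2 = A * (A * B - S ^+ 2).
  transitivity (\sum_(k | P k) (A ^+ 2 * y k ^+ 2 + (- 2 * A * S) * (x k * y k)
                                + S ^+ 2 * x k ^+ 2)).
    by apply: eq_bigr => k _; ring.
  rewrite !big_split /= -!mulr_sumr -/A -/B -/S; ring.
have [A_gt0|A_le0] := ltrP 0 A.
  by rewrite -subr_ge0 -(pmulr_rge0 _ A_gt0) -expand sum_sqr_ge0.
have A0 : A = 0 by apply/le_anti; rewrite A_le0 A_ge0.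
have x0 k : P k -> x k = 0.
  move=> Pk; apply/eqP; rewrite -sqrf_eq0; apply/eqP.
  by move: k Pk; apply/psumr_eq0P => [k _|]; [exact: sqr_ge0 | exact: A0].
have -> : S = 0 by rewrite /S big1 // => k /x0 ->; rewrite mul0r.
by rewrite A0 expr0n mul0r.
Qed.

Lemma cauchy_schwarz_sqrt {T : finType} (P : pred T) (x y : T -> R) :
  `|\sum_(k | P k) x k * y k| <=
  Num.sqrt (\sum_(k | P k) x k ^+ 2) * Num.sqrt (\sum_(k | P k) y k ^+ 2).
Proof.
rewrite -sqrtrM ?sum_sqr_ge0 // -sqrtr_sqr.
exact/ler_wsqrtr/cauchy_schwarz_sum.
Qed.

Lemma sqrt_sum_sqr_le_of_gap {T : finType} (p q : T -> R) (m r : R) : 0 <= m -> 0 < r ->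
  2 * r * \sum_k (q k - p k) ^+ 2 <=
    m * (\sum_k p k ^+ 2 - \sum_k q k ^+ 2 - \sum_k (q k - p k) ^+ 2) ->
  r * Num.sqrt (\sum_k p k ^+ 2) <= (m + 2 * r) * Num.sqrt (\sum_k q k ^+ 2).
Proof.
move=> m_ge0 r_gt0 gap.
set np := Num.sqrt _; set nq := Num.sqrt _.
have np_ge0 : 0 <= np := sqrtr_ge0 _.
have nq_ge0 : 0 <= nq := sqrtr_ge0 _.
have np2 : \sum_k p k ^+ 2 = np ^+ 2 by rewrite sqr_sqrtr ?sum_sqr_ge0.
have nq2 : \sum_k q k ^+ 2 = nq ^+ 2 by rewrite sqr_sqrtr ?sum_sqr_ge0.
set P := \sum_k p k * q k.
have P_le : P <= np * nq := le_trans (ler_norm _) (cauchy_schwarz_sqrt _ _ _).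
have qp2 : \sum_k (q k - p k) ^+ 2 = np ^+ 2 - 2 * P + nq ^+ 2.
  rewrite -np2 -nq2 mulr_sumr -!sumrB -big_split /=.
  by apply: eq_bigr => k _; ring.
rewrite qp2 np2 nq2 in gap.
have key : r * np ^+ 2 <= (m + 2 * r) * (np * nq) by nra.
have [->|np_neq0] := eqVneq np 0.
  by rewrite mulr0 mulr_ge0 // addr_ge0 // ?mulr_ge0 // ltW.
have np_gt0 : 0 < np by rewrite lt_def np_neq0.
by rewrite -(ler_pM2l np_gt0); move: key; rewrite expr2; nra.
Qed.

Lemma sqrt_sum_sqrZ {T : finType} (P : pred T) (a : R) (x : T -> R) :
  Num.sqrt (\sum_(k | P k) (a * x k) ^+ 2) = `|a| * Num.sqrt (\sum_(k | P k) x k ^+ 2).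
Proof.
rewrite -sqrtr_sqr -sqrtrM ?sqr_ge0 // mulr_sumr; congr Num.sqrt.
by apply: eq_bigr => k _; rewrite exprMn.
Qed.

Lemma sqrt_sum_sqrD_le {T : finType} (P : pred T) (x y : T -> R) :
  Num.sqrt (\sum_(k | P k) (x k + y k) ^+ 2) <=
  Num.sqrt (\sum_(k | P k) x k ^+ 2) + Num.sqrt (\sum_(k | P k) y k ^+ 2).
Proof.
rewrite -(ler_pXn2r (n := 2)) // ?nnegrE ?addr_ge0 ?sqrtr_ge0 //.
rewrite sqrrD !sqr_sqrtr ?sum_sqr_ge0 //.
have -> : \sum_(k | P k) (x k + y k) ^+ 2 = \sum_(k | P k) x k ^+ 2
    + 2 * \sum_(k | P k) x k * y k + \sum_(k | P k) y k ^+ 2.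
  rewrite mulr_sumr -!big_split /=; apply: eq_bigr => k _; ring.
have := cauchy_schwarz_sqrt P x y; have := ler_norm (\sum_(k | P k) x k * y k).
by rewrite mulr2n; lra.
Qed.

End SumsOfSquares.

Section Perturbation.
Context {R : realFieldType}.

Lemma ge0_of_lin_pert (A c : R) : (forall t, 0 < t < 1 -> 0 <= A + t * c) -> 0 <= A.
Proof.
move=> H; rewrite leNgt; apply/negP => A_lt0.
have e_gt0 : 0 < `|c| - A by have := normr_ge0 c; lra.
set t := - A / (2 * (`|c| - A)).
have te : t * (2 * (`|c| - A)) = - A by rewrite /t divfK // gt_eqF // mulr_gt0.
have t_gt0 : 0 < t by rewrite divr_gt0 ?mulr_gt0 //; lra.
have t_lt1 : t < 1.
  rewrite ltr_pdivrMr ?mulr_gt0 // mul1r; have := normr_ge0 c; lra.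
have := H t; rewrite t_gt0 t_lt1 => /(_ isT).
have := ler_norm c; nra.
Qed.

Lemma eq0_of_quad_pert (a c : R) :
  (forall t, `|t| < 1 -> 0 <= t * a + t ^+ 2 * c) -> a = 0.
Proof.
move=> H.
have signed_ge0 e : e = 1 \/ e = -1 -> 0 <= e * a.
  move=> e_pm; apply: (@ge0_of_lin_pert _ c) => t /andP[t_gt0 t_lt1].
  have et : `|e * t| = t.
    by case: e_pm => ->; rewrite normrM ?normrN normr1 mul1r gtr0_norm.
  have := H (e * t); rewrite et t_lt1 => /(_ isT).
  have -> : e * t * a + (e * t) ^+ 2 * c = t * (e * a + t * c).
    by case: e_pm => ->; ring.
  by rewrite pmulr_rge0.
have := signed_ge0 1 (or_introl erefl); have := signed_ge0 (-1) (or_intror erefl).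
by rewrite mul1r mulN1r oppr_ge0 => a_le0 a_ge0; apply/le_anti; rewrite a_le0.
Qed.

End Perturbation.

Section Continuity.
Context {R : realType} {T : topologicalType}.
Implicit Types f g : T -> R.

Lemma continuous_add f g : continuous f -> continuous g ->
  continuous (fun x => f x + g x).
Proof. by move=> cf cg x; exact: (continuousD (cf x) (cg x)). Qed.

Lemma continuous_sub f g : continuous f -> continuous g ->
  continuous (fun x => f x - g x).
Proof. by move=> cf cg x; exact: (continuousB (cf x) (cg x)). Qed.

Lemma continuous_mul f g : continuous f -> continuous g ->
  continuous (fun x => f x * g x).
Proof. by move=> cf cg x; exact: (continuousM (cf x) (cg x)). Qed.

Lemma continuous_sqr f : continuous f -> continuous (fun x => f x ^+ 2).
Proof.
move=> cf; have -> : (fun x => f x ^+ 2) = (fun x => f x * f x).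
  by apply/funext => x; rewrite expr2.
exact: continuous_mul.
Qed.

Lemma continuous_sqrt f : continuous f -> continuous (fun x => Num.sqrt (f x)).
Proof. by move=> cf x; apply: continuous_comp; [exact: cf | exact: sqrt_continuous]. Qed.

Lemma continuous_sum (K : Type) (s : seq K) (P : pred K) (F : K -> T -> R) :
  (forall i, continuous (F i)) -> continuous (fun x => \sum_(i <- s | P i) F i x).
Proof. by move=> cF; apply: (continuous_big add_continuous) => i _. Qed.

End Continuity.

Section ExistenceOfMinimizers.
Import ArrowAsProduct.
Context {R : realType} {J : finType}.

(* Tychonoff makes the box of the sublevel bounds compact. *)
Lemma exists_minimizer (F : (J -> R) -> R) (B : J -> R) : continuous F ->
  (forall p, F p <= F (fun _ => 0) -> forall j, `|p j| <= B j) ->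
  exists p, forall q, F p <= F q.
Proof.
move=> cF sublevel.
set box := [set p : J -> R | forall j, `[- B j, B j] (p j)].
have box_compact : compact box.
  by apply: (@tychonoff J (fun _ => R) (fun j => `[- B j, B j])) => j; exact: segment_compact.
have box0 : box (fun _ => 0).
  move=> j; have := sublevel (fun _ => 0) (lexx _) j.
  by rewrite /= in_itv /= normr0 => B_ge0; rewrite oppr_le0 B_ge0.
have [p _ p_min] := compact_EVT_min (ex_intro _ _ box0) box_compact (continuous_subspaceT cF).
exists p => q; have [q_box|q_nbox] := pselect (box q); first by apply: p_min; rewrite inE.
have : ~ F q <= F (fun _ => 0).
  by move=> Fq; apply: q_nbox => j; have := sublevel q Fq j; rewrite /= in_itv /= ler_norml.
by move/negP; rewrite -ltNge => /ltW; apply: le_trans; apply: p_min; rewrite inE.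
Qed.

Lemma continuous_proj (j : J) : continuous (fun p : J -> R => p j).
Proof. exact: (@proj_continuous J (fun _ => R) j). Qed.

End ExistenceOfMinimizers.

Section BlockGeometry.
Context {R : realType} {d : nat} {G : {set {set 'I_d}}}.
Local Notation I := (gidx d G).
Local Notation vdot := (vdot R d G).
Local Notation vnorm := (vnorm R d G).
Local Notation N := (blocknorm R d G).
Local Notation Mop := (Mop R d G).
Implicit Types (x z y : I -> R) (u : 'I_d -> R) (g : {set 'I_d}).

(* The transpose of M: entry (g, i) of M^T u is u_i. *)
Definition Mt u : I -> R := fun k => u (val k).2.
Definition bdot z x g := \sum_(k : I | (val k).1 == g) z k * x k.
Definition restr g x : I -> R := fun k => if (val k).1 == g then x k else 0.

Lemma vdot_sqr x : vdot x x = \sum_k x k ^+ 2.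
Proof. by apply: eq_bigr => k _; rewrite expr2. Qed.

Lemma vnorm_sqr x : vnorm x ^+ 2 = \sum_k x k ^+ 2.
Proof. by rewrite /Defs.vnorm sqr_sqrtr vdot_sqr // sum_sqr_ge0. Qed.

Lemma dnorm_sqr u : dnorm R d u ^+ 2 = \sum_i u i ^+ 2.
Proof. by rewrite /dnorm sqr_sqrtr // sum_sqr_ge0. Qed.

Lemma vdot_Mt u x : vdot (Mt u) x = \sum_i u i * Mop x i.
Proof.
under [RHS]eq_bigr do rewrite /Defs.Mop mulr_sumr.
rewrite /Defs.vdot (partition_big (fun k : I => (val k).2) xpredT) //=.
by apply: eq_bigr => i _; apply: eq_bigr => k /eqP <-.
Qed.

Lemma sum_Mt_sqr_le u : \sum_k Mt u k ^+ 2 <= #|{: I}|%:R * \sum_i u i ^+ 2.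
Proof.
have Mt_le k : Mt u k ^+ 2 <= \sum_i u i ^+ 2.
  by rewrite (bigD1 (val k).2) //= lerDl sum_sqr_ge0.
by apply: le_trans (ler_sum _ (fun k _ => Mt_le k)) _; rewrite sumr_const mulr_natl.
Qed.

Lemma MopDZ x z t i : Mop (fun k => x k + t * z k) i = Mop x i + t * Mop z i.
Proof. by rewrite /Defs.Mop big_split mulr_sumr. Qed.

Lemma vdot_blocks z x : vdot z x = \sum_(g in G) bdot z x g.
Proof.
rewrite /Defs.vdot (partition_big (fun k : I => (val k).1) (mem G)) //=.
by case=> -[g i] /= /andP[].
Qed.

Lemma vdot_restr z g x : vdot z (restr g x) = bdot z x g.
Proof.
rewrite /Defs.vdot /bdot [RHS]big_mkcond /=; apply: eq_bigr => k _.
by rewrite /restr; case: ifP => _; rewrite ?mulr0.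
Qed.

Lemma restr_out g x k : (val k).1 != g -> restr g x k = 0.
Proof. by rewrite /restr => /negbTE ->. Qed.

Lemma blocknorm_ge0 x g : 0 <= N x g.
Proof. exact: sqrtr_ge0. Qed.

Lemma blocknorm_sqr x g : N x g ^+ 2 = \sum_(k | (val k).1 == g) x k ^+ 2.
Proof. by rewrite /blocknorm sqr_sqrtr // sum_sqr_ge0. Qed.

Lemma eq_blocknorm x z g : (forall k, (val k).1 = g -> x k = z k) -> N x g = N z g.
Proof. by move=> xz; rewrite /blocknorm; congr Num.sqrt; apply: eq_bigr => k /eqP/xz ->. Qed.

Lemma blocknormZ a x g : N (fun k => a * x k) g = `|a| * N x g.
Proof. exact: sqrt_sum_sqrZ. Qed.

Lemma blocknormD_le x z g : N (fun k => x k + z k) g <= N x g + N z g.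
Proof. exact: sqrt_sum_sqrD_le. Qed.

Lemma ler_norm_bdot z x g : `|bdot z x g| <= N z g * N x g.
Proof. exact: cauchy_schwarz_sqrt. Qed.

Lemma ler_abs_blocknorm x k : `|x k| <= N x (val k).1.
Proof.
rewrite -sqrtr_sqr /blocknorm; apply: ler_wsqrtr.
by rewrite (bigD1 k) //= lerDl sum_sqr_ge0.
Qed.

Lemma vdist_le (S : set (I -> R)) y z : S z -> vdist R d G y S <= vnorm (fun k => y k - z k).
Proof.
move=> Sz; apply: ge_inf; last by exists z.
by exists 0 => _ [z' _ <-]; exact: sqrtr_ge0.
Qed.

End BlockGeometry.

Section AugmentedLagrangian.
Context {R : realType} {d : nat} {G : {set {set 'I_d}}}.
Context {lambda rho : R} {w : {set 'I_d} -> R} {b : 'I_d -> R}.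
Hypotheses (lambda_gt0 : 0 < lambda) (w_gt0 : forall g, g \in G -> 0 < w g).
Hypothesis rho_gt0 : 0 < rho.
Local Notation I := (gidx d G).
Local Notation vdot := (vdot R d G).
Local Notation vnorm := (vnorm R d G).
Local Notation N := (blocknorm R d G).
Local Notation Mop := (Mop R d G).
Local Notation L := (Lrho R d G lambda rho w b).
Local Notation grho := (grho R d G lambda rho w b).
Local Notation Ystar := (Ystar R d G lambda rho w b).
Implicit Types (x z y dl : I -> R) (u : 'I_d -> R) (g : {set 'I_d}).

Definition penalty x := lambda * \sum_(g in G) w g * N x g.
Definition resid x : 'I_d -> R := fun i => Mop x i - b i.
Definition dual_feasible z := forall g, g \in G -> N z g <= lambda * w g.

(* The dual objective phi_y(u) of the proximal problem, in the variable
   u = M x^2 - b; M^T u plays the role of the multiplier of x^1 = x^2. *)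
Definition dual_obj y u := - (2^-1 * \sum_i u i ^+ 2) - \sum_i u i * b i
  - (2 * rho)^-1 * \sum_k (Mt u k - y k) ^+ 2.

Lemma Lrho_expand x1 x2 y : L x1 x2 y = penalty x1 + 2^-1 * \sum_i resid x2 i ^+ 2
  + \sum_k y k * (x1 k - x2 k) + rho / 2 * \sum_k (x1 k - x2 k) ^+ 2.
Proof. by rewrite /Lrho dnorm_sqr vnorm_sqr. Qed.

Lemma Lrho_split x1 x2 y u : L x1 x2 y = dual_obj y u + (penalty x1 + vdot (Mt u) x1)
  + 2^-1 * \sum_i (resid x2 i - u i) ^+ 2
  + (2 * rho)^-1 * \sum_k (rho * (x1 k - x2 k) + y k - Mt u k) ^+ 2.
Proof.
have E1 : \sum_i (resid x2 i - u i) ^+ 2 = \sum_i resid x2 i ^+ 2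
    + (-2) * \sum_i u i * Mop x2 i + 2 * \sum_i u i * b i + \sum_i u i ^+ 2.
  rewrite !mulr_sumr -!big_split /=; apply: eq_bigr => i _; rewrite /resid; ring.
have E2 : \sum_k (rho * (x1 k - x2 k) + y k - Mt u k) ^+ 2 =
    rho ^+ 2 * \sum_k (x1 k - x2 k) ^+ 2 + 2 * rho * \sum_k y k * (x1 k - x2 k)
    + (-2) * rho * \sum_k Mt u k * (x1 k - x2 k) + \sum_k (Mt u k - y k) ^+ 2.
  rewrite !mulr_sumr -!big_split /=; apply: eq_bigr => k _; ring.
have E3 : vdot (Mt u) x1 = \sum_k Mt u k * (x1 k - x2 k) + vdot (Mt u) x2.
  rewrite /Defs.vdot -big_split /=; apply: eq_bigr => k _; ring.
rewrite Lrho_expand E1 E2 E3 vdot_Mt /dual_obj; field.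
by rewrite gt_eqF.
Qed.

Lemma penalty_vdot_blocks x z :
  penalty x + vdot z x = \sum_(g in G) (lambda * w g * N x g + bdot z x g).
Proof.
rewrite vdot_blocks /penalty big_split mulr_sumr; congr (_ + _).
by apply: eq_bigr => g _; rewrite mulrA.
Qed.

Lemma penalty_vdot_ge0 x z : dual_feasible z -> 0 <= penalty x + vdot z x.
Proof.
move=> zfeas; rewrite penalty_vdot_blocks; apply: sumr_ge0 => g gG.
have := ler_norm_bdot z x g; rewrite ler_norml => /andP[+ _].
have : N z g * N x g <= lambda * w g * N x g by rewrite ler_wpM2r ?blocknorm_ge0 ?zfeas.
lra.
Qed.

Lemma Lrho_ge_dual x1 x2 y u : dual_feasible (Mt u) ->
  dual_obj y u + 2^-1 * \sum_i (resid x2 i - u i) ^+ 2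
  + (2 * rho)^-1 * \sum_k (rho * (x1 k - x2 k) + y k - Mt u k) ^+ 2 <= L x1 x2 y.
Proof.
move=> ufeas; rewrite (Lrho_split x1 x2 y u).
by have := penalty_vdot_ge0 x1 _ ufeas; lra.
Qed.

Lemma dual_feasible0 : dual_feasible (fun _ => 0).
Proof.
move=> g gG; rewrite /blocknorm big1 => [|k _]; last by rewrite expr0n.
by rewrite sqrtr0 mulr_ge0 ?ltW ?w_gt0.
Qed.

Lemma dual_le_Lrho x1 x2 y u : dual_feasible (Mt u) -> dual_obj y u <= L x1 x2 y.
Proof.
move=> ufeas; apply: le_trans _ (Lrho_ge_dual x1 x2 y u ufeas).
by rewrite -addrA lerDl addr_ge0 // mulr_ge0 ?sum_sqr_ge0 // invr_ge0 // mulr_ge0 // ltW.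
Qed.

Lemma grho_ge_dual y u : dual_feasible (Mt u) -> dual_obj y u <= grho y.
Proof.
move=> ufeas; apply: lb_le_inf; first by exists (L 0 0 y), 0 => //; exists 0.
by move=> _ [x1 _ [x2 _ <-]]; exact: dual_le_Lrho.
Qed.

Lemma grho_le_Lrho y x1 x2 : grho y <= L x1 x2 y.
Proof.
apply: ge_inf; last by exists x1 => //; exists x2.
exists (dual_obj y (fun _ => 0)) => _ [z1 _ [z2 _ <-]].
exact: dual_le_Lrho dual_feasible0.
Qed.

Lemma penalty_add_block x g dl : g \in G -> (forall k, (val k).1 != g -> dl k = 0) ->
  penalty (fun k => x k + dl k) - penalty x =
  lambda * w g * (N (fun k => x k + dl k) g - N x g).
Proof.
move=> gG dl_out; rewrite /penalty (bigD1 g gG) [in X in _ - X](bigD1 g gG) /=.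
have -> : \sum_(h in G | h != g) w h * N (fun k => x k + dl k) h =
          \sum_(h in G | h != g) w h * N x h.
  apply: eq_bigr => h /andP[_ hg]; congr (_ * _); apply: eq_blocknorm => k kh.
  by rewrite dl_out ?addr0 // kh.
ring.
Qed.

(* What minimality along every line through x gives for
   penalty + <z, .> + (a smooth remainder). *)
Definition stationary x z := forall dl, exists c, forall t,
  0 <= penalty (fun k => x k + t * dl k) - penalty x + t * vdot z dl + t ^+ 2 * c.

Lemma stationary_feasible {x z} : stationary x z -> dual_feasible z.
Proof.
move=> xz g gG; have lw_gt0 : 0 < lambda * w g by rewrite mulr_gt0 ?w_gt0.
set dl := restr g (fun k => - z k).
have [c Hc] := xz dl.
suff : 0 <= N z g * (lambda * w g - N z g).
  have [->|Nz_neq0] := eqVneq (N z g) 0; first by move=> _; exact: ltW.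
  by rewrite pmulr_rge0 ?subr_ge0 // lt_def Nz_neq0 blocknorm_ge0.
apply: (@ge0_of_lin_pert _ _ c) => t /andP[t_gt0 _].
have := Hc t; rewrite (penalty_add_block x g _ gG) => [|k kg]; last by rewrite /dl restr_out ?mulr0.
have step : N (fun k => x k + t * dl k) g <= N x g + t * N z g.
  rewrite (@eq_blocknorm _ _ _ _ (fun k => x k + (- t) * z k)) => [|k kg].
    by rewrite (le_trans (blocknormD_le _ _ _)) // blocknormZ normrN gtr0_norm.
  by rewrite /dl /restr kg eqxx mulrN mulNr.
have dz : vdot z dl = - N z g ^+ 2.
  by rewrite vdot_restr blocknorm_sqr /bdot -sumrN; apply: eq_bigr => k _; ring.
rewrite dz => H.
have : 0 <= t * (N z g * (lambda * w g - N z g) + t * c).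
  by have := ler_wpM2l (ltW lw_gt0) step; lra.
by rewrite pmulr_rge0.
Qed.

Lemma stationary_complementary {x z} : stationary x z -> penalty x + vdot z x = 0.
Proof.
move=> xz; rewrite penalty_vdot_blocks big1 // => g gG.
have [c Hc] := xz (restr g x).
apply: (@eq0_of_quad_pert _ _ c) => t t_lt1.
have := Hc t; rewrite (penalty_add_block x g _ gG) => [|k kg]; last by rewrite restr_out ?mulr0.
rewrite (@eq_blocknorm _ _ _ _ (fun k => (1 + t) * x k)) => [|k kg]; last first.
  by rewrite /restr kg eqxx; ring.
rewrite blocknormZ ger0_norm ?vdot_restr; last by move: t_lt1; rewrite ltr_norml; lra.
lra.
Qed.

Lemma Lrho_perturb x1 x2 y dl1 dl2 t :
  L (fun k => x1 k + t * dl1 k) (fun k => x2 k + t * dl2 k) y - L x1 x2 y =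
  (penalty (fun k => x1 k + t * dl1 k) - penalty x1)
  + t * (vdot (Mt (resid x2)) dl2
         + vdot (fun k => y k + rho * (x1 k - x2 k)) (fun k => dl1 k - dl2 k))
  + t ^+ 2 * (2^-1 * \sum_i Mop dl2 i ^+ 2 + rho / 2 * \sum_k (dl1 k - dl2 k) ^+ 2).
Proof.
rewrite !Lrho_expand vdot_Mt /resid /Defs.vdot.
under eq_bigr do rewrite MopDZ.
have E1 : \sum_i (Mop x2 i + t * Mop dl2 i - b i) ^+ 2 = \sum_i (Mop x2 i - b i) ^+ 2
    + 2 * t * \sum_i (Mop x2 i - b i) * Mop dl2 i + t ^+ 2 * \sum_i Mop dl2 i ^+ 2.
  rewrite !mulr_sumr -!big_split /=; apply: eq_bigr => i _; ring.
have E2 : \sum_k y k * (x1 k + t * dl1 k - (x2 k + t * dl2 k)) =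
    \sum_k y k * (x1 k - x2 k) + t * \sum_k y k * (dl1 k - dl2 k).
  rewrite !mulr_sumr -!big_split /=; apply: eq_bigr => k _; ring.
have E3 : \sum_k (x1 k + t * dl1 k - (x2 k + t * dl2 k)) ^+ 2 = \sum_k (x1 k - x2 k) ^+ 2
    + 2 * t * \sum_k (x1 k - x2 k) * (dl1 k - dl2 k) + t ^+ 2 * \sum_k (dl1 k - dl2 k) ^+ 2.
  rewrite !mulr_sumr -!big_split /=; apply: eq_bigr => k _; ring.
have E4 : \sum_k (y k + rho * (x1 k - x2 k)) * (dl1 k - dl2 k) =
    \sum_k y k * (dl1 k - dl2 k) + rho * \sum_k (x1 k - x2 k) * (dl1 k - dl2 k).
  rewrite !mulr_sumr -!big_split /=; apply: eq_bigr => k _; ring.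
by rewrite E1 E2 E3 E4; field.
Qed.

Definition Lrho_min y x1 x2 := forall x1' x2', L x1 x2 y <= L x1' x2' y.
Definition primal_min x := forall x', L x x (fun _ => 0) <= L x' x' (fun _ => 0).

Lemma Lrho_min_multiplier {y x1 x2} : Lrho_min y x1 x2 ->
  forall k, Mt (resid x2) k = y k + rho * (x1 k - x2 k).
Proof.
move=> min12; set a := fun k => Mt (resid x2) k - (y k + rho * (x1 k - x2 k)).
suff a0 : \sum_k a k ^+ 2 = 0.
  move=> k; apply/eqP; rewrite -subr_eq0 -sqrf_eq0; apply/eqP.
  by move: k (erefl true); apply/psumr_eq0P => // k _; exact: sqr_ge0.
set c := 2^-1 * \sum_i Mop a i ^+ 2 + rho / 2 * \sum_k (0 - a k) ^+ 2.
apply: (@eq0_of_quad_pert _ _ c) => t _.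
have lin : vdot (Mt (resid x2)) a + vdot (fun k => y k + rho * (x1 k - x2 k)) (fun k => 0 - a k)
    = \sum_k a k ^+ 2.
  by rewrite /Defs.vdot -big_split /=; apply: eq_bigr => k _; rewrite /a; ring.
have E := Lrho_perturb x1 x2 y (fun _ => 0) a t.
have x1_fix : (fun k => x1 k + t * 0) = x1 by apply/funext => k; rewrite mulr0 addr0.
rewrite x1_fix subrr add0r lin in E.
by have := min12 x1 (fun k => x2 k + t * a k); rewrite -subr_ge0 E.
Qed.

Lemma Lrho_min_stationary {y x1 x2} : Lrho_min y x1 x2 -> stationary x1 (Mt (resid x2)).
Proof.
move=> min12 dl.
exists (2^-1 * \sum_i Mop (fun _ => 0) i ^+ 2 + rho / 2 * \sum_k (dl k - 0) ^+ 2) => t.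
have lin : vdot (Mt (resid x2)) (fun _ => 0)
    + vdot (fun k => y k + rho * (x1 k - x2 k)) (fun k => dl k - 0) = vdot (Mt (resid x2)) dl.
  rewrite /Defs.vdot -big_split /=; apply: eq_bigr => k _.
  by rewrite (Lrho_min_multiplier min12); ring.
have E := Lrho_perturb x1 x2 y dl (fun _ => 0) t.
have x2_fix : (fun k => x2 k + t * 0) = x2 by apply/funext => k; rewrite mulr0 addr0.
rewrite x2_fix lin in E.
by have := min12 (fun k => x1 k + t * dl k) x2; rewrite -subr_ge0 E.
Qed.

Lemma primal_min_stationary {x} : primal_min x -> stationary x (Mt (resid x)).
Proof.
move=> xmin dl.
exists (2^-1 * \sum_i Mop dl i ^+ 2 + rho / 2 * \sum_k (dl k - dl k) ^+ 2) => t.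
have E := Lrho_perturb x x (fun _ => 0) dl dl t.
rewrite [X in vdot _ _ + X]big1 ?addr0 in E => [|k _]; last by rewrite !subrr mulr0.
by have := xmin (fun k => x k + t * dl k); rewrite -subr_ge0 E.
Qed.

(* The KKT conditions close the duality gap. *)
Lemma Lrho_eq_dual {y x1 x2} : stationary x1 (Mt (resid x2)) ->
  (forall k, Mt (resid x2) k = y k + rho * (x1 k - x2 k)) ->
  L x1 x2 y = dual_obj y (resid x2).
Proof.
move=> st mult; rewrite (Lrho_split x1 x2 y (resid x2)) (stationary_complementary st).
rewrite big1 => [|i _]; last by rewrite subrr expr2 mulr0.
rewrite big1 => [|k _]; last by rewrite mult [y k + _]addrC subrr expr2 mulr0.
by rewrite !mulr0 !addr0.
Qed.

Lemma grho_Lrho_min {y x1 x2} : Lrho_min y x1 x2 -> grho y = dual_obj y (resid x2).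
Proof.
move=> min12; have st := Lrho_min_stationary min12.
apply/le_anti/andP; split; last exact: grho_ge_dual (stationary_feasible st).
by rewrite -(Lrho_eq_dual st (Lrho_min_multiplier min12)) grho_le_Lrho.
Qed.

Lemma Lrho_diag x y y' : L x x y = L x x y'.
Proof.
have zero y0 : \sum_k y0 k * (x k - x k) = 0 by rewrite big1 // => k _; rewrite subrr mulr0.
by rewrite !Lrho_expand !zero.
Qed.

Lemma primal_min_gap {x} y : primal_min x -> L x x y = dual_obj (Mt (resid x)) (resid x).
Proof.
move=> xmin; rewrite (Lrho_diag x y (Mt (resid x))).
by apply: Lrho_eq_dual (primal_min_stationary xmin) _ => k; rewrite subrr mulr0 addr0.
Qed.

Lemma primal_min_Ystar {x} : primal_min x -> Ystar (Mt (resid x)).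
Proof.
move=> xmin y; apply: le_trans (grho_le_Lrho y x x) _.
rewrite (primal_min_gap y xmin) grho_ge_dual //.
exact: stationary_feasible (primal_min_stationary xmin).
Qed.

Lemma grho_gradient {y x1 x2} : Lrho_min y x1 x2 ->
  is_gradient R d G grho y (fun k => x1 k - x2 k).
Proof.
move=> min12 eps eps_gt0; exists (2 * rho * eps) => [|h h_small]; first by rewrite !mulr_gt0.
set v := fun k => x1 k - x2 k.
have g_y := grho_Lrho_min min12.
have upper : grho (fun k => y k + h k) <= grho y + vdot v h.
  apply: (le_trans (grho_le_Lrho _ x1 x2)).
  rewrite g_y -(Lrho_eq_dual (Lrho_min_stationary min12) (Lrho_min_multiplier min12)).
  rewrite !Lrho_expand /Defs.vdot.
  have -> : \sum_k (y k + h k) * (x1 k - x2 k) = \sum_k y k * (x1 k - x2 k) + \sum_k v k * h k.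
    by rewrite -big_split; apply: eq_bigr => k _; rewrite /v /=; ring.
  lra.
have lower : grho y + vdot v h - (2 * rho)^-1 * \sum_k h k ^+ 2 <= grho (fun k => y k + h k).
  apply: le_trans _ (grho_ge_dual _ _ (stationary_feasible (Lrho_min_stationary min12))).
  rewrite g_y /dual_obj /Defs.vdot.
  have -> : \sum_k (Mt (resid x2) k - (y k + h k)) ^+ 2 = \sum_k (Mt (resid x2) k - y k) ^+ 2
      + (-2) * rho * \sum_k v k * h k + \sum_k h k ^+ 2.
    rewrite mulr_sumr -!big_split; apply: eq_bigr => k _.
    by rewrite (Lrho_min_multiplier min12) /v /=; ring.
  by rewrite le_eqVlt; apply/orP; left; apply/eqP; field; rewrite gt_eqF.
have quad : (2 * rho)^-1 * \sum_k h k ^+ 2 <= eps * vnorm h.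
  rewrite -vnorm_sqr expr2 mulrA ler_wpM2r ?sqrtr_ge0 //.
  by rewrite ler_pdivrMl ?mulr_gt0 // ltW.
by rewrite ler_norml; apply/andP; split; lra.
Qed.

Lemma dist_dual_opt_le {y x1 x2 x} : Lrho_min y x1 x2 -> primal_min x ->
  vnorm (fun k => y k - Mt (resid x) k) <=
  (#|{: I}|%:R + 2 * rho) * vnorm (fun k => x1 k - x2 k).
Proof.
move=> min12 xmin.
have mult := Lrho_min_multiplier min12.
have gap1 := Lrho_ge_dual x1 x2 y (resid x) (stationary_feasible (primal_min_stationary xmin)).
have gap2 := Lrho_ge_dual x x (Mt (resid x)) (resid x2)
  (stationary_feasible (Lrho_min_stationary min12)).
rewrite (Lrho_eq_dual (Lrho_min_stationary min12) mult) /dual_obj in gap1.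
rewrite (primal_min_gap _ xmin) /dual_obj in gap2.
set u := resid x2 in mult gap1 gap2 *; set us := resid x in gap1 gap2 *.
set ys := Mt us in gap1 gap2 *.
set D := \sum_i (u i - us i) ^+ 2 in gap1.
set S := \sum_k (Mt u k - ys k) ^+ 2 in gap2.
set A1 := \sum_k (Mt u k - y k) ^+ 2 in gap1.
set A2 := \sum_k (ys k - y k) ^+ 2 in gap1.
have S1 : \sum_k (rho * (x1 k - x2 k) + y k - ys k) ^+ 2 = S.
  by apply: eq_bigr => k _; rewrite mult [y k + _]addrC.
have S2 : \sum_k (rho * (x k - x k) + ys k - Mt u k) ^+ 2 = S.
  by apply: eq_bigr => k _; ring.
have D2 : \sum_i (us i - u i) ^+ 2 = D by apply: eq_bigr => i _; ring.
have ys0 : \sum_k (ys k - ys k) ^+ 2 = 0 by rewrite big1 // => k _; rewrite subrr expr2 mulr0.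
rewrite S1 in gap1; rewrite S2 D2 ys0 in gap2.
have Dgap : 2 * rho * D <= A2 - A1 - S.
  by rewrite -ler_pdivlMl ?mulr_gt0 //; lra.
have SD : S <= #|{: I}|%:R * D := sum_Mt_sqr_le (fun i => u i - us i).
have bound : rho * Num.sqrt A2 <= (#|{: I}|%:R + 2 * rho) * Num.sqrt A1.
  apply: (sqrt_sum_sqr_le_of_gap (fun k => ys k - y k) (fun k => Mt u k - y k)) => //=.
  have -> : \sum_k (Mt u k - y k - (ys k - y k)) ^+ 2 = S.
    by apply: eq_bigr => k _; rewrite opprB addrA subrK.
  rewrite -/A1 -/A2.
  have : 2 * rho * S <= 2 * rho * (#|{: I}|%:R * D) by rewrite ler_pM2l ?mulr_gt0.
  have : #|{: I}|%:R * (2 * rho * D) <= #|{: I}|%:R * (A2 - A1 - S) by rewrite ler_wpM2l.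
  lra.
have -> : vnorm (fun k => y k - ys k) = Num.sqrt A2.
  by rewrite /Defs.vnorm vdot_sqr; congr Num.sqrt; apply: eq_bigr => k _; ring.
have A1_eq : Num.sqrt A1 = rho * vnorm (fun k => x1 k - x2 k).
  rewrite /Defs.vnorm vdot_sqr -(gtr0_norm rho_gt0) -sqrt_sum_sqrZ /A1.
  by congr Num.sqrt; apply: eq_bigr => k _; rewrite mult; congr (_ ^+ 2); ring.
by rewrite -(ler_pM2l rho_gt0) mulrCA -A1_eq.
Qed.

Lemma penalty_ge_abs x k : lambda * w (val k).1 * `|x k| <= penalty x.
Proof.
have kG : (val k).1 \in G by case: k => -[g i] /= /andP[].
rewrite /penalty (bigD1 _ kG) /= mulrDr -mulrA ler_wpDr //.
- apply/mulr_ge0/sumr_ge0 => [|g /andP[gG _]]; first exact: ltW.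
  by apply: mulr_ge0; [exact/ltW/w_gt0 | exact: blocknorm_ge0].
- apply: ler_wpM2l; first exact: ltW.
  by apply: ler_wpM2l; [exact/ltW/w_gt0 | exact: ler_abs_blocknorm].
Qed.

Lemma Lrho_sublevel {y x1 x2} : L x1 x2 y <= L (fun _ => 0) (fun _ => 0) y ->
  penalty x1 + rho / 4 * \sum_k (x1 k - x2 k) ^+ 2 <=
  L (fun _ => 0) (fun _ => 0) y + \sum_k y k ^+ 2 / rho.
Proof.
rewrite Lrho_expand => sub.
have amgm k : - (y k ^+ 2 / rho) <= y k * (x1 k - x2 k) + rho / 4 * (x1 k - x2 k) ^+ 2.
  rewrite -subr_ge0 opprK.
  have -> : y k * (x1 k - x2 k) + rho / 4 * (x1 k - x2 k) ^+ 2 + y k ^+ 2 / rho =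
      (rho / 2 * (x1 k - x2 k) + y k) ^+ 2 / rho by field; rewrite gt_eqF.
  by rewrite divr_ge0 ?sqr_ge0 ?ltW.
have : - \sum_k y k ^+ 2 / rho <=
    \sum_k y k * (x1 k - x2 k) + rho / 4 * \sum_k (x1 k - x2 k) ^+ 2.
  by rewrite -sumrN mulr_sumr -big_split /=; apply: ler_sum => k _; exact: amgm.
have : 0 <= 2^-1 * \sum_i resid x2 i ^+ 2.
  by apply: mulr_ge0; [rewrite invr_ge0 | exact: sum_sqr_ge0].
lra.
Qed.

Lemma Lrho_sublevel_bounded y : exists B : I -> R, forall x1 x2,
  L x1 x2 y <= L (fun _ => 0) (fun _ => 0) y -> forall k, `|x1 k| <= B k /\ `|x2 k| <= B k.
Proof.
set K := L (fun _ => 0) (fun _ => 0) y + \sum_k y k ^+ 2 / rho.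
exists (fun k => K / (lambda * w (val k).1) + (4 * K / rho + 1)) => x1 x2 sub k.
have lw_gt0 : 0 < lambda * w (val k).1.
  by rewrite mulr_gt0 ?w_gt0 //; case: k {sub} => -[g i] /= /andP[].
have H := Lrho_sublevel sub; rewrite -/K in H.
have pen_k := penalty_ge_abs x1 k.
have pen_k_ge0 : 0 <= lambda * w (val k).1 * `|x1 k|.
  by apply: mulr_ge0; [exact: ltW | exact: normr_ge0].
have vk_le : rho / 4 * (x1 k - x2 k) ^+ 2 <= rho / 4 * \sum_k (x1 k - x2 k) ^+ 2.
  by apply: ler_wpM2l; [rewrite divr_ge0 ?ltW | rewrite (bigD1 k) //= lerDl sum_sqr_ge0].
have vk_ge0 : 0 <= rho / 4 * (x1 k - x2 k) ^+ 2.
  by apply: mulr_ge0; [rewrite divr_ge0 ?ltW | exact: sqr_ge0].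
have x1_le : `|x1 k| <= K / (lambda * w (val k).1) by rewrite ler_pdivlMr // mulrC; lra.
have v_le : `|x1 k - x2 k| <= 4 * K / rho + 1.
  have v2_le : rho / 4 * (x1 k - x2 k) ^+ 2 <= K by lra.
  have : `|x1 k - x2 k| ^+ 2 <= 4 * K / rho.
    rewrite real_normK ?num_real // ler_pdivlMr // mulrC.
    have -> : rho * (x1 k - x2 k) ^+ 2 = 4 * (rho / 4 * (x1 k - x2 k) ^+ 2) by field.
    by rewrite ler_pM2l.
  by have := normr_ge0 (x1 k - x2 k); case: (lerP `|x1 k - x2 k| 1); nra.
have K_ge0 : 0 <= 4 * K / rho + 1 by rewrite addr_ge0 // divr_ge0 ?(ltW rho_gt0) //; lra.
split; first by lra.
have := ler_normB (x1 k) (x1 k - x2 k); rewrite opprB addrC subrK.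
lra.
Qed.

Import ArrowAsProduct.

Lemma Lrho_continuous (J : finType) (e1 e2 : I -> J) y :
  continuous (fun p : J -> R => L (fun k => p (e1 k)) (fun k => p (e2 k)) y).
Proof.
rewrite /Lrho /blocknorm /dnorm /Defs.vnorm /Defs.vdot /Defs.Mop.
repeat first [ exact: continuous_proj | exact: cst_continuous
  | apply: continuous_sum => ? | apply: continuous_sqrt | apply: continuous_sqr
  | apply: continuous_sub | apply: continuous_add | apply: continuous_mul ].
Qed.

Lemma exists_Lrho_min y : exists x1 x2, Lrho_min y x1 x2.
Proof.
have [B sub] := Lrho_sublevel_bounded y.
set F := fun p : I + I -> R => L (fun k => p (inl k)) (fun k => p (inr k)) y.
have F_sublevel q : F q <= F (fun _ => 0) ->
    forall j, `|q j| <= match j with inl k | inr k => B k end.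
  by move=> Fq [k|k]; have [] := sub _ _ Fq k.
have [p pmin] := exists_minimizer F _ (Lrho_continuous _ inl inr y) F_sublevel.
exists (fun k => p (inl k)), (fun k => p (inr k)) => x1 x2.
exact: (pmin (fun j => match j with inl k => x1 k | inr k => x2 k end)).
Qed.

Lemma exists_primal_min : exists x, primal_min x.
Proof.
have [B sub] := Lrho_sublevel_bounded (fun _ => 0).
have F_sublevel q : L q q (fun _ => 0) <= L (fun _ => 0) (fun _ => 0) (fun _ => 0) ->
    forall k, `|q k| <= B k.
  by move=> Fq k; have [] := sub _ _ Fq k.
have [p pmin] := exists_minimizer _ B (Lrho_continuous _ id id (fun _ => 0)) F_sublevel.
by exists p.
Qed.

End AugmentedLagrangian.

Theorem lemma3p1 (R : realType) (d : nat) (G : {set {set 'I_d}})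
  (lambda rho : R) (w : {set 'I_d} -> R) (b : 'I_d -> R) :
  (forall g, g \in G -> (0 < #|g|)%N) ->
  0 < lambda -> (forall g, g \in G -> 0 < w g) -> 0 < rho ->
  Ystar R d G lambda rho w b !=set0 /\
  exists2 tau : R, 0 < tau &
    forall y : gidx d G -> R, exists v : gidx d G -> R,
      is_gradient R d G (grho R d G lambda rho w b) y v /\
      vdist R d G y (Ystar R d G lambda rho w b) <= tau * vnorm R d G v.
Proof.
(* Empty groups would be harmless: the bound does not use this hypothesis. *)
move=> _ lambda_gt0 w_gt0 rho_gt0.
have [x xmin] := exists_primal_min (b := b) lambda_gt0 w_gt0 rho_gt0.
have ys_opt : Ystar R d G lambda rho w b (Mt (resid (b := b) x)).
  exact: primal_min_Ystar.
split; first by exists (Mt (resid (b := b) x)).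
exists (#|{: gidx d G}|%:R + 2 * rho); first by rewrite ltr_wpDl // mulr_gt0.
move=> y; have [x1 [x2 min12]] := exists_Lrho_min (b := b) lambda_gt0 w_gt0 rho_gt0 y.
exists (fun k => x1 k - x2 k); split; first exact: grho_gradient.
apply: le_trans (vdist_le _ y _ ys_opt) _.
exact: (dist_dual_opt_le lambda_gt0 w_gt0 rho_gt0 min12 xmin).
Qed.
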